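(* Let $K$ be a finite group with trivial centre $Z(K)=1$, written additively as $(K,+)$. (1) Let $B$ be a skew left brace with additive group $(B,+)=K$ and multiplicative group $C=(B,\cdot)$. Then there exist subgroups $X$ and $Y$ of $\mathrm{Aut}(K)$ satisfying: (a) $XY = X\,\mathrm{Inn}(K) = Y\,\mathrm{Inn}(K)$; (b) there are subgroups $N, M \le \mathrm{Inn}(K)$ with $N \trianglelefteq X$ and $M \trianglelefteq Y$, and a group isomorphism $\gamma\colon Y/M \to X/N$ such that: whenever $x\in X$, $y\in Y$ satisfy $\gamma(yM)=xN$, we have $xy^{-1}\in \mathrm{Inn}(K)$; and for every $z\in \mathrm{Inn}(K)$ there exist $x\in X$, $y\in Y$ with $xN=\gamma(yM)$ and $xy^{-1}=z$; (c) $|K| = |X|\,|M| = |Y|\,|N|$; and moreover (d) $C$ has two normal subgroups $T$ and $V$ with $T\cap V=1$, $X\cong C/T$ and $Y\cong C/V$. (2) Conversely, if $X$ and $Y$ are subgroups of $\mathrm{Aut}(K)$ satisfying (a), (b), (c) (for some $N$, $M$, $\gamma$ as in (b)), then there exists a skew left brace $B$ with additive group $(B,+)=K$ whose multiplicative group $C=(B,\cdot)$ has two normal subgroups $T$, $V$ with $T\cap V=1$, $X\cong C/T$ and $Y\cong C/V$.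
   Context: A skew left brace is a set $B$ with two group structures $(B,+)$ (not necessarily abelian) and $(B,\cdot)$ such that $a(b+c) = ab - a + ac$ for all $a,b,c\in B$. Its additive group is $(B,+)$ and its multiplicative group is $(B,\cdot)$. $\mathrm{Inn}(K)$ denotes the group of inner automorphisms of $K$. Products of subgroups such as $XY$ denote the set $\{xy : x\in X, y\in Y\}$ inside $\mathrm{Aut}(K)$. *)

From HB Require Import structures.
From mathcomp Require Import all_boot all_order all_fingroup all_solvable.
Set Implicit Arguments. Unset Strict Implicit. Unset Printing Implicit Defensive.
Local Open Scope group_scope.

(* The finite group K (written additively in the paper) is a finGroupType,
   written multiplicatively in MathComp. Note: in MathComp, (p * q) x = q (p x), so the paper's
   composition  x o y  is the MathComp product  y * x. *)

Definition Inn (K : finGroupType) : {set {perm K}} :=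
  conj_aut [set: K]%G @* [set: K].

(* A skew left brace whose additive group is K: a finite group C (the
   multiplicative group (B,.)), with a bijection f : C -> K (with inverse g)
   identifying the underlying set of B with K, so that the addition of B is
   b + c := g (f b * f c), and the brace axiom a(b+c) = ab - a + ac holds. *)
Definition skew_brace_on (K C : finGroupType) (f : C -> K) (g : K -> C) : Prop :=
  [/\ cancel f g, cancel g f &
      forall a b c : C,
        f (a * g (f b * f c)) = f (a * b) * (f a)^-1 * f (a * c)].

(* Conditions (a), (b), (c) on subgroups X, Y of Aut(K).
   Paper's products (function composition) translated: XY = Y * X,
   X Inn(K) = Inn(K) * X, x y^{-1} = y^-1 * x. *)
Definition cond_abc (K : finGroupType) (X Y : {group {perm K}}) : Prop :=
  ((Y * X = Inn K * X) /\ (Inn K * X = Inn K * Y)) /\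
  exists (N M : {group {perm K}}) (gam : {morphism Y / M >-> coset_of N}),
    [/\ N \subset Inn K, M \subset Inn K, N <| X & M <| Y] /\
    [/\ isom (Y / M) (X / N) gam,
        (forall x y, x \in X -> y \in Y -> gam (coset M y) = coset N x ->
           y^-1 * x \in Inn K),
        (forall z, z \in Inn K -> exists x y, [/\ x \in X, y \in Y,
           coset N x = gam (coset M y) & y^-1 * x = z]) &
        #|[set: K]| = (#|X| * #|M|)%N /\ #|[set: K]| = (#|Y| * #|N|)%N].

Definition cond_d (K C : finGroupType) (X Y : {group {perm K}}) : Prop :=
  exists T V : {group C},
    [/\ T <| [set: C], V <| [set: C], T :&: V = 1,
        X \isog [set: C] / T & Y \isog [set: C] / V].

From HB Require Import structures.
From mathcomp Require Import all_boot all_order all_fingroup all_solvable.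
Set Implicit Arguments. Unset Strict Implicit. Unset Printing Implicit Defensive.
Local Open Scope group_scope.

(* For a skew brace with multiplicative group C, lam_a x = -f(a) + f(a x) is
   an automorphism of K.  Twisting lam by the inner automorphisms of the f(a)
   gives two homomorphisms phi, psi : C -> Aut(K) with psi_a^-1 phi_a equal to
   conjugation by f(a^-1); as Z(K) = 1, a |-> psi_a^-1 phi_a is a bijection
   C -> Inn(K).  Goursat's lemma for the subgroup {(phi_a, psi_a)} of X * Y
   then yields (a)-(d), with N, M the images of the kernels.  Conversely, the
   graph {(x, y) | gam(yM) = xN} of gam is a group C of order |K| on which
   (x, y) |-> k with (conjugation by k) = x y^-1 is a bijective 1-cocycle
   into K, i.e. a skew brace structure on K with multiplicative group C. *)

Section InnerAutomorphisms.
Variable K : finGroupType.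

Definition innp (k : K) : {perm K} := conj_aut [set: K] k.

Lemma innpE k z : innp k z = z ^ k.
Proof. by rewrite /innp norm_conj_autE ?normT ?inE. Qed.

Lemma innpM k l : innp (k * l) = innp k * innp l.
Proof. by apply/permP=> z; rewrite permM !innpE conjgM. Qed.

Lemma innpV k : innp k^-1 = (innp k)^-1.
Proof.
apply: (mulgI (innp k)); rewrite -innpM !mulgV.
by apply/permP=> z; rewrite innpE conjg1 perm1.
Qed.

Lemma InnP z : reflect (exists k, z = innp k) (z \in Inn K).
Proof.
apply: (iffP idP) => [/morphimP[k _ _ ->]|[k ->]]; first by exists k.
by apply/morphimP; exists k; rewrite ?normT ?inE.
Qed.

Lemma mem_innp k : innp k \in Inn K.
Proof. by apply/InnP; exists k. Qed.

Lemma innp_Aut k : innp k \in Aut [set: K].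
Proof. exact: subsetP (Aut_conj_aut _ _) _ (mem_innp k). Qed.

Lemma innp_autJ s k : s \in Aut [set: K] -> s^-1 * innp k * s = innp (s k).
Proof.
move=> As; apply/permP=> z; rewrite !permM !innpE /conjg.
have sM := morphicP (Aut_morphic As).
have sV : s k^-1 = (s k)^-1 by exact: (morphV (autm As) (in_setT k)).
by rewrite !sM ?inE // permKV sV.
Qed.

Lemma Inn_autJ s i : s \in Aut [set: K] -> i \in Inn K -> s^-1 * i * s \in Inn K.
Proof. by move=> As /InnP[k ->]; rewrite innp_autJ ?mem_innp. Qed.

Lemma Inn_mulC s t : s \in Aut [set: K] -> s * t \in Inn K -> t * s \in Inn K.
Proof. by move=> As /(Inn_autJ As); rewrite mulgA mulVg mul1g. Qed.

Definition inn_repr (z : {perm K}) : K := odflt 1 [pick k | innp k == z].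

Lemma inn_reprK z : z \in Inn K -> innp (inn_repr z) = z.
Proof.
rewrite /inn_repr; case: pickP => [k /eqP //|none /InnP[k ek]].
by have := none k; rewrite ek eqxx.
Qed.

End InnerAutomorphisms.

Canonical Inn_group (K : finGroupType) := [group of Inn K].

Section TrivialCentre.
Variable K : finGroupType.
Hypothesis hZ : 'Z([set: K]) = 1.

Lemma injm_innp : 'injm (conj_aut [set: K]).
Proof. by rewrite ker_conj_aut -hZ /center setTI. Qed.

Lemma innp_inj : injective (@innp K).
Proof. by move=> k l; apply: (injmP injm_innp); rewrite inE subsetT. Qed.

Lemma card_Inn : #|Inn K| = #|[set: K]|.
Proof. by rewrite /Inn card_injm ?injm_innp ?normT. Qed.

End TrivialCentre.

Section AutPair.
Variables (K C : finGroupType) (phi psi : {morphism [set: C] >-> {perm K}}).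

Definition ldiv_aut a := (psi a)^-1 * phi a.

Local Notation X := (phi @* [set: C])%G.
Local Notation Y := (psi @* [set: C])%G.
Let N := (phi @* 'ker psi)%G.
Let M := (psi @* 'ker phi)%G.

Lemma mem_phi a : phi a \in X. Proof. by rewrite mem_morphim ?inE. Qed.
Lemma mem_psi a : psi a \in Y. Proof. by rewrite mem_morphim ?inE. Qed.

Lemma aut_pair_d : injective ldiv_aut -> cond_d C X Y.
Proof.
move=> ldiv_inj; exists ('ker phi)%G, ('ker psi)%G; split; try exact: ker_normal.
- apply/trivgP/subsetP=> a /setIP[Ka Kb]; apply/set1P.
  by apply: ldiv_inj; rewrite /ldiv_aut (mker Ka) (mker Kb) !morph1.
- by rewrite isog_sym first_isog.
- by rewrite isog_sym first_isog.
Qed.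

Hypothesis hZ : 'Z([set: K]) = 1.
Hypothesis psiA : forall a, psi a \in Aut [set: K].
Hypotheses (ldiv_inj : injective ldiv_aut)
           (im_ldiv : ldiv_aut @: [set: C] = Inn K).

Lemma ldiv_Inn a : ldiv_aut a \in Inn K.
Proof. by rewrite -im_ldiv imset_f ?inE. Qed.

Lemma ldiv_onto z : z \in Inn K -> exists a, ldiv_aut a = z.
Proof. by rewrite -im_ldiv => /imsetP[a _ ->]; exists a. Qed.

Lemma phi_psiV_Inn a : phi a * (psi a)^-1 \in Inn K.
Proof. by apply: Inn_mulC (ldiv_Inn a); rewrite groupV. Qed.

Lemma psi_phiV_Inn a : psi a * (phi a)^-1 \in Inn K.
Proof. by rewrite -[_ * _]invgK invMg invgK groupV phi_psiV_Inn. Qed.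

Lemma aut_pair_prod : (Y * X = Inn K * X) /\ (Inn K * X = Inn K * Y).
Proof.
split; apply/eqP; rewrite eqEsubset; apply/andP; split;
  apply/subsetP=> _ /mulsgP[u _ Hu /morphimP[b _ _ ->] ->].
- case/morphimP: Hu => a _ _ ->.
  rewrite -[psi a](mulgKV (phi a)) -mulgA -morphM ?inE //.
  by rewrite mem_mulg ?psi_phiV_Inn ?mem_phi.
- have [a <-] := ldiv_onto Hu.
  by rewrite -mulgA -morphV ?inE // -morphM ?inE // mem_mulg ?mem_psi ?mem_phi.
- rewrite -[phi b](mulgKV (psi b)) mulgA.
  by rewrite mem_mulg ?mem_psi // groupM ?phi_psiV_Inn.
- rewrite -[psi b](mulgKV (phi b)) mulgA.
  by rewrite mem_mulg ?mem_phi // groupM ?psi_phiV_Inn.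
Qed.

Lemma aut_pair_normalN : N <| X. Proof. exact: morphim_normal (ker_normal psi). Qed.
Lemma aut_pair_normalM : M <| Y. Proof. exact: morphim_normal (ker_normal phi). Qed.

Lemma phi_norm a : phi a \in 'N(N).
Proof. by rewrite (subsetP (normal_norm aut_pair_normalN)) ?mem_phi. Qed.

Lemma psi_norm a : psi a \in 'N(M).
Proof. by rewrite (subsetP (normal_norm aut_pair_normalM)) ?mem_psi. Qed.

Lemma coset_phi_morphic : morphic [set: C] (fun a => coset N (phi a)).
Proof. by apply/morphicP=> a b _ _; rewrite morphM ?inE // morphM ?phi_norm. Qed.

Lemma ker_psi_sub : 'ker psi \subset 'ker (morphm coset_phi_morphic).
Proof.
by apply/subsetP=> a Ka; rewrite !inE /= morphmE coset_id ?mem_morphim.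
Qed.

Let psi_iso := factm_morphism ker_psi_sub (subxx [set: C]).

Lemma psi_isoE a : psi_iso (psi a) = coset N (phi a).
Proof. exact: (factmE ker_psi_sub (subxx [set: C]) (in_setT a)). Qed.

Lemma ker_coset_sub : 'ker (coset M) \subset 'ker psi_iso.
Proof.
rewrite ker_coset; apply/subsetP=> _ /morphimP[a _ Ka ->].
by apply/kerP; rewrite ?mem_psi // psi_isoE (mker Ka) morph1.
Qed.

Definition aut_pair_iso : {morphism Y / M >-> coset_of N} :=
  factm ker_coset_sub (normal_norm aut_pair_normalM).

Lemma aut_pair_isoE a : aut_pair_iso (coset M (psi a)) = coset N (phi a).
Proof. by rewrite -psi_isoE; exact: (factmE ker_coset_sub _ (mem_psi a)). Qed.

Lemma aut_pair_sub_Inn : N \subset Inn K /\ M \subset Inn K.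
Proof.
split; apply/subsetP=> _ /morphimP[a _ Ka ->]; have := ldiv_Inn a.
  by rewrite /ldiv_aut (mker Ka) invg1 mul1g.
by rewrite /ldiv_aut (mker Ka) mulg1 groupV.
Qed.

Lemma phiN_psiM a : phi a \in N -> psi a \in M.
Proof.
case/morphimP=> b _ Kb eb; have Kab : a * b^-1 \in 'ker phi.
  by rewrite !inE morphM ?inE // morphV ?inE // eb mulgV eqxx.
have -> : psi a = psi (a * b^-1).
  by rewrite morphM ?inE // morphV ?inE // (mker Kb) invg1 mulg1.
exact: mem_morphim (in_setT _) Kab.
Qed.

Lemma aut_pair_isom : isom (Y / M) (X / N) aut_pair_iso.
Proof.
apply/isomP; split.
  apply/subsetP=> _ /setIP[/morphimP[_ _ /morphimP[a _ _ ->] ->]].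
  rewrite !inE aut_pair_isoE => /eqP/(coset_idr (phi_norm a))/phiN_psiM Ma.
  by apply/eqP/coset_id.
apply/eqP; rewrite eqEsubset; apply/andP; split; apply/subsetP=> w.
  case/morphimP=> u _ /morphimP[y _ /morphimP[a _ _ ->] ->] ->.
  by rewrite aut_pair_isoE mem_morphim ?phi_norm ?mem_phi.
case/morphimP=> x _ /morphimP[a _ _ ->] ->.
apply/morphimP; exists (coset M (psi a)); rewrite ?aut_pair_isoE //;
  by rewrite mem_morphim ?psi_norm ?mem_psi.
Qed.

Lemma aut_pair_iso_Inn x y : x \in X -> y \in Y ->
  aut_pair_iso (coset M y) = coset N x -> y^-1 * x \in Inn K.
Proof.
move=> /morphimP[b _ _ ->] /morphimP[a _ _ ->]; rewrite aut_pair_isoE.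
move=> /esym/(rcoset_kercosetP (phi_norm b) (phi_norm a)).
rewrite mem_rcoset => /morphimP[c _ Kc ec].
have -> : phi b = phi (c * a) by rewrite morphM ?inE // -ec mulgKV.
have -> : psi a = psi (c * a) by rewrite morphM ?inE // (mker Kc) mul1g.
exact: ldiv_Inn.
Qed.

Lemma aut_pair_iso_onto z : z \in Inn K -> exists x y, [/\ x \in X, y \in Y,
  coset N x = aut_pair_iso (coset M y) & y^-1 * x = z].
Proof.
case/ldiv_onto=> a <-; exists (phi a), (psi a).
by rewrite mem_phi mem_psi aut_pair_isoE.
Qed.

Lemma card_aut_pair_dom : #|[set: K]| = #|[set: C]|.
Proof. by rewrite -(card_Inn hZ) -im_ldiv card_imset. Qed.

Lemma card_ker_pair : #|N| = #|'ker psi| /\ #|M| = #|'ker phi|.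
Proof.
split; rewrite /N /M /= morphimEsub ?subsetT //; apply: card_in_imset => a b Ka Kb e;
  by apply: ldiv_inj; rewrite /ldiv_aut (mker Ka) (mker Kb) e.
Qed.

Lemma card_aut_pair : #|[set: K]| = (#|X| * #|M|)%N /\ #|[set: K]| = (#|Y| * #|N|)%N.
Proof.
have [-> ->] := card_ker_pair.
by rewrite card_aut_pair_dom !card_morphim !setIid !(mulnC #|_ : _|) !Lagrange ?subsetT.
Qed.

Lemma aut_pair_abc : cond_abc X Y.
Proof.
split; first exact: aut_pair_prod.
have [sNI sMI] := aut_pair_sub_Inn.
exists N, M, aut_pair_iso; split.
  by rewrite sNI sMI aut_pair_normalN aut_pair_normalM.
split; [exact: aut_pair_isom | exact: aut_pair_iso_Inn | exact: aut_pair_iso_onto |].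
exact: card_aut_pair.
Qed.
End AutPair.

Lemma skew_brace_of_cocycle (K C : finGroupType) (f : C -> K) (g : K -> C)
    (lam : C -> {perm K}) :
  cancel f g -> cancel g f -> (forall a, lam a \in Aut [set: K]) ->
  (forall a b, f (a * b) = f a * lam a (f b)) -> skew_brace_on f g.
Proof.
move=> fK gK lamA fM; split=> // a b c.
rewrite !fM gK (morphicP (Aut_morphic (lamA a))) ?inE //.
by rewrite !mulgA mulgKV.
Qed.

Section BraceToAutPair.
Variables (K C : finGroupType) (f : C -> K) (g : K -> C).
Hypothesis hb : skew_brace_on f g.

Let fK : cancel f g. Proof. by case: hb. Qed.
Let gK : cancel g f. Proof. by case: hb. Qed.

Lemma brace_f1 : f 1 = 1.
Proof.
have [_ _ /(_ 1 (g 1) (g 1))] := hb; rewrite !mul1g !gK mulg1 mul1g mulg1.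
by move=> e; rewrite -[f 1]invgK -e invg1.
Qed.

Definition brace_lam_fun a x := (f a)^-1 * f (a * g x).

Lemma brace_lam_inj a : injective (brace_lam_fun a).
Proof. by move=> x y /mulgI/(can_inj fK)/mulgI/(can_inj gK). Qed.

Definition brace_lam a : {perm K} := perm (@brace_lam_inj a).

Lemma brace_lam_f a b : brace_lam a (f b) = (f a)^-1 * f (a * b).
Proof. by rewrite permE /brace_lam_fun fK. Qed.

Lemma brace_fM a b : f (a * b) = f a * brace_lam a (f b).
Proof. by rewrite brace_lam_f mulKVg. Qed.

Lemma brace_lamM a x y : brace_lam a (x * y) = brace_lam a x * brace_lam a y.
Proof.
have [_ _ /(_ a (g x) (g y))] := hb; rewrite !gK => e.
by rewrite !permE /brace_lam_fun e !mulgA.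
Qed.

Lemma brace_lam_Aut a : brace_lam a \in Aut [set: K].
Proof.
rewrite inE; apply/andP; split; first by apply/subsetP=> x _; rewrite inE.
by apply/morphicP=> x y _ _; apply: brace_lamM.
Qed.

Lemma brace_lamV a x : brace_lam a x^-1 = (brace_lam a x)^-1.
Proof. exact: (morphV (autm (brace_lam_Aut a)) (in_setT x)). Qed.

Lemma brace_lam_mul a b : brace_lam (a * b) = brace_lam b * brace_lam a.
Proof.
apply/permP=> z; rewrite permM -(gK z) !brace_lam_f brace_lamM brace_lamV.
by rewrite !brace_lam_f invMg invgK !mulgA mulgK.
Qed.

(* Products of permutations compose from left to right, so brace_lam is an
   anti-homomorphism and its pointwise inverse is a homomorphism. *)
Lemma brace_phi_morphic : morphic [set: C] (fun a => (brace_lam a)^-1).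
Proof. by apply/morphicP=> a b _ _; rewrite brace_lam_mul invMg. Qed.

Lemma brace_psi_morphic :
  morphic [set: C] (fun a => innp (f a) * (brace_lam a)^-1).
Proof.
apply/morphicP=> a b _ _; rewrite brace_lam_mul invMg brace_fM innpM.
by rewrite -(innp_autJ _ (brace_lam_Aut a)) !mulgA mulgK.
Qed.

Definition brace_phi : {morphism [set: C] >-> {perm K}} :=
  morphm_morphism brace_phi_morphic.
Definition brace_psi : {morphism [set: C] >-> {perm K}} :=
  morphm_morphism brace_psi_morphic.

Lemma brace_phiE a : brace_phi a = (brace_lam a)^-1. Proof. by []. Qed.
Lemma brace_psiE a : brace_psi a = innp (f a) * (brace_lam a)^-1. Proof. by []. Qed.

Lemma brace_lam_finv a : brace_lam a (f a^-1) = (f a)^-1.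
Proof. by rewrite brace_lam_f mulgV brace_f1 mulg1. Qed.

Lemma brace_ldiv a : ldiv_aut brace_phi brace_psi a = innp (f a^-1).
Proof.
rewrite /ldiv_aut brace_phiE brace_psiE invMg invgK -innpV.
rewrite -{1}(invgK (brace_lam a)) innp_autJ ?groupV ?brace_lam_Aut //.
by rewrite -brace_lam_finv permK.
Qed.

Lemma brace_ldiv_inj :
  'Z([set: K]) = 1 -> injective (ldiv_aut brace_phi brace_psi).
Proof.
by move=> hZ a b; rewrite !brace_ldiv => /(innp_inj hZ)/(can_inj fK)/invg_inj.
Qed.

Lemma im_brace_ldiv : ldiv_aut brace_phi brace_psi @: [set: C] = Inn K.
Proof.
apply/setP=> z; apply/imsetP/InnP=> [[a _ ->]|[k ->]].
  by exists (f a^-1); rewrite brace_ldiv.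
by exists (g k)^-1; rewrite ?inE // brace_ldiv invgK gK.
Qed.

Lemma brace_aut_pair : 'Z([set: K]) = 1 ->
  exists X Y : {group {perm K}},
    [/\ X \subset Aut [set: K], Y \subset Aut [set: K], cond_abc X Y & cond_d C X Y].
Proof.
move=> hZ; exists (brace_phi @* [set: C])%G, (brace_psi @* [set: C])%G.
have psiA a : brace_psi a \in Aut [set: K].
  by rewrite brace_psiE groupM ?groupV ?brace_lam_Aut ?innp_Aut.
split.
- by apply/subsetP=> _ /morphimP[a _ _ ->]; rewrite brace_phiE groupV brace_lam_Aut.
- by apply/subsetP=> _ /morphimP[a _ _ ->].
- exact: aut_pair_abc hZ psiA (brace_ldiv_inj hZ) im_brace_ldiv.
- exact: aut_pair_d (brace_ldiv_inj hZ).
Qed.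
End BraceToAutPair.

Section AutPairToBrace.
Variable K : finGroupType.
Hypothesis hZ : 'Z([set: K]) = 1.
Variables (X Y N M : {group {perm K}}) (gam : {morphism Y / M >-> coset_of N}).
Hypotheses (sYA : Y \subset Aut [set: K]) (nNX : N <| X) (nMY : M <| Y)
  (gam_isom : isom (Y / M) (X / N) gam)
  (gam_Inn : forall x y, x \in X -> y \in Y -> gam (coset M y) = coset N x ->
     y^-1 * x \in Inn K)
  (gam_onto : forall z, z \in Inn K -> exists x y, [/\ x \in X, y \in Y,
     coset N x = gam (coset M y) & y^-1 * x = z])
  (card_YN : #|[set: K]| = (#|Y| * #|N|)%N).

Let X_norm x : x \in X -> x \in 'N(N). Proof. exact: subsetP (normal_norm nNX) x. Qed.
Let Y_norm y : y \in Y -> y \in 'N(M). Proof. exact: subsetP (normal_norm nMY) y. Qed.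

Definition gam_graph : {set {perm K} * {perm K}} :=
  [set p | [&& p.1 \in X, p.2 \in Y & gam (coset M p.2) == coset N p.1]].

Lemma gam_graph_group : group_set gam_graph.
Proof.
apply/group_setP; split; first by rewrite inE /= !group1 !morph1 eqxx.
move=> [x1 y1] [x2 y2]; rewrite !inE /=.
move=> /and3P[X1 Y1 /eqP e1] /and3P[X2 Y2 /eqP e2].
by rewrite !groupM //= !morphM ?mem_quotient ?Y_norm ?X_norm // e1 e2.
Qed.

Canonical gam_graph_grp := Group gam_graph_group.
Definition graphC := subg_of gam_graph_grp.

Lemma graphP (c : graphC) : [/\ (sgval c).1 \in X, (sgval c).2 \in Y &
  gam (coset M (sgval c).2) = coset N (sgval c).1].
Proof. by have := subgP c; rewrite inE => /and3P[-> -> /eqP]. Qed.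

Lemma graph_elem x y : x \in X -> y \in Y -> gam (coset M y) = coset N x ->
  exists c : graphC, sgval c = (x, y).
Proof.
move=> Xx Yy e; have Gxy : (x, y) \in gam_graph_grp by rewrite inE /= Xx Yy e eqxx.
by exists (Subg Gxy).
Qed.

Lemma graph_fst_morphic : morphic [set: graphC] (fun c => (sgval c).1).
Proof. by apply/morphicP. Qed.

Lemma graph_snd_morphic : morphic [set: graphC] (fun c => (sgval c).2).
Proof. by apply/morphicP. Qed.

Definition graph_fst : {morphism [set: graphC] >-> {perm K}} :=
  morphm_morphism graph_fst_morphic.
Definition graph_snd : {morphism [set: graphC] >-> {perm K}} :=
  morphm_morphism graph_snd_morphic.

Lemma graph_fstE c : graph_fst c = (sgval c).1. Proof. by []. Qed.
Lemma graph_sndE c : graph_snd c = (sgval c).2. Proof. by []. Qed.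

Lemma sgval_graph (c : graphC) : sgval c = (graph_fst c, graph_snd c).
Proof. by case: c => -[]. Qed.

Lemma im_graph_fst : graph_fst @* [set: graphC] = X.
Proof.
have [_ imgam] := isomP gam_isom.
apply/eqP; rewrite eqEsubset; apply/andP; split; apply/subsetP=> x.
  by case/morphimP=> c _ _ ->; have [] := graphP c.
move=> Xx; have : coset N x \in X / N by rewrite mem_quotient.
rewrite -imgam => /morphimP[_ _ /morphimP[y _ Yy ->] e].
have [c ec] := graph_elem Xx Yy (esym e).
by apply/morphimP; exists c; rewrite ?inE // ?graph_fstE ?graph_sndE ec.
Qed.

Lemma im_graph_snd : graph_snd @* [set: graphC] = Y.
Proof.
have [_ imgam] := isomP gam_isom.
apply/eqP; rewrite eqEsubset; apply/andP; split; apply/subsetP=> y.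
  by case/morphimP=> c _ _ ->; have [] := graphP c.
move=> Yy; have : gam (coset M y) \in X / N.
  by rewrite -imgam mem_morphim ?mem_quotient ?Y_norm.
case/morphimP=> x _ Xx e; have [c ec] := graph_elem Xx Yy e.
by apply/morphimP; exists c; rewrite ?inE // ?graph_fstE ?graph_sndE ec.
Qed.

Lemma graph_fst_ker_snd : graph_fst @* 'ker graph_snd = N.
Proof.
apply/eqP; rewrite eqEsubset; apply/andP; split; apply/subsetP=> x.
  case/morphimP=> c _ Kc ->; have [Xx _] := graphP c.
  rewrite [(sgval c).2](mker Kc) !morph1 => e.
  by apply: coset_idr; rewrite ?X_norm // -e.
move=> Nx; have Xx : x \in X by rewrite (subsetP (normal_sub nNX)).
have [c ec] : exists c : graphC, sgval c = (x, 1).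
  by apply: graph_elem; rewrite ?group1 // !morph1 coset_id.
by apply/morphimP; exists c; rewrite ?inE // ?graph_sndE ?graph_fstE ec //= eqxx.
Qed.

Lemma card_graphC : #|[set: graphC]| = #|[set: K]|.
Proof.
rewrite card_YN -im_graph_snd -graph_fst_ker_snd card_morphim setIid.
rewrite morphimEsub ?subsetT // card_in_imset.
  by rewrite mulnC Lagrange ?subsetT.
move=> a b Ka Kb e; apply: subg_inj.
by rewrite !sgval_graph e (mker Ka) (mker Kb).
Qed.

Local Notation graph_ldiv := (ldiv_aut graph_fst graph_snd).

Lemma graph_ldiv_Inn c : graph_ldiv c \in Inn K.
Proof. by have [] := graphP c; apply: gam_Inn. Qed.

Lemma im_graph_ldiv : graph_ldiv @: [set: graphC] = Inn K.
Proof.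
apply/eqP; rewrite eqEsubset; apply/andP; split; apply/subsetP=> z.
  by case/imsetP=> c _ ->; apply: graph_ldiv_Inn.
case/gam_onto=> x [y [Xx Yy e <-]]; have [c ec] := graph_elem Xx Yy (esym e).
by apply/imsetP; exists c; rewrite ?inE // /ldiv_aut graph_fstE graph_sndE ec.
Qed.

Lemma graph_ldiv_inj : injective graph_ldiv.
Proof.
move=> a b; have /imset_injP : #|graph_ldiv @: [set: graphC]| == #|[set: graphC]|.
  by rewrite im_graph_ldiv (card_Inn hZ) card_graphC.
by apply; rewrite inE.
Qed.

Lemma graph_snd_Aut c : graph_snd c \in Aut [set: K].
Proof. by rewrite (subsetP sYA) // -im_graph_snd mem_morphim ?inE. Qed.

Definition graph_brace_map (c : graphC) : K :=
  inn_repr (graph_fst c * (graph_snd c)^-1).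

Lemma innp_graph_brace_map c :
  innp (graph_brace_map c) = graph_fst c * (graph_snd c)^-1.
Proof.
by apply/inn_reprK/Inn_mulC/graph_ldiv_Inn; rewrite groupV graph_snd_Aut.
Qed.

Lemma graph_brace_mapM a b :
  graph_brace_map (a * b) = graph_brace_map a * (graph_snd a)^-1 (graph_brace_map b).
Proof.
apply: (innp_inj hZ); rewrite innpM -innp_autJ ?groupV ?graph_snd_Aut // invgK.
by rewrite !innp_graph_brace_map !morphM ?inE // invMg !mulgA mulgKV.
Qed.

Lemma graph_brace_map_inj : injective graph_brace_map.
Proof.
move=> a b /(congr1 (@innp K)); rewrite !innp_graph_brace_map => e.
have e' : (graph_fst b)^-1 * graph_fst a = (graph_snd b)^-1 * graph_snd a.
  by rewrite -(mulgKV (graph_snd a) (graph_fst a)) e !mulgA mulVg mul1g.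
have : graph_ldiv (b^-1 * a) = graph_ldiv 1.
  rewrite /ldiv_aut !morph1 invg1 mulg1 !morphM ?inE // !morphV ?inE // e'.
  by rewrite invMg invgK !mulgA mulgK mulVg.
by move/graph_ldiv_inj/eqP; rewrite -(inj_eq (mulgI b)) mulKVg mulg1 => /eqP.
Qed.

Lemma aut_pair_brace : exists (C : finGroupType) (f : C -> K) (g : K -> C),
  skew_brace_on f g /\ cond_d C X Y.
Proof.
have [g fK gK] : bijective graph_brace_map.
  by apply: (inj_card_bij graph_brace_map_inj); rewrite -!cardsT card_graphC.
exists graphC, graph_brace_map, g; split.
  have lamA a : (graph_snd a)^-1 \in Aut [set: K] by rewrite groupV graph_snd_Aut.
  exact: skew_brace_of_cocycle fK gK lamA graph_brace_mapM.
have <- : (graph_fst @* [set: graphC])%G = X by apply/val_inj/im_graph_fst.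
have <- : (graph_snd @* [set: graphC])%G = Y by apply/val_inj/im_graph_snd.
exact: aut_pair_d graph_ldiv_inj.
Qed.
End AutPairToBrace.

Theorem theoremA (K : finGroupType) (hZ : 'Z([set: K]) = 1) :
  (forall (C : finGroupType) (f : C -> K) (g : K -> C),
     skew_brace_on f g ->
     exists X Y : {group {perm K}},
       [/\ X \subset Aut [set: K], Y \subset Aut [set: K],
           cond_abc X Y & cond_d C X Y]) /\
  (forall X Y : {group {perm K}},
     X \subset Aut [set: K] -> Y \subset Aut [set: K] -> cond_abc X Y ->
     exists (C : finGroupType) (f : C -> K) (g : K -> C),
       skew_brace_on f g /\ cond_d C X Y).
Proof.
split=> [C f g hb | X Y _ sYA [_ [N [M [gam [[_ _ nNX nMY] [iso gInn gOnto [_ cYN]]]]]]]].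
  exact: brace_aut_pair hb hZ.
exact: (aut_pair_brace hZ sYA nNX nMY iso gInn gOnto cYN).
Qed.
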